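(* Let $X$ be a set with $|X|\ge 4$. Then $S_X$, as a subgroup of itself, is not rack admissible; that is, there is no rack $(X,* )$ with $\mathrm{LMlt}(X,* )=S_X$.
   Context: A rack is a groupoid $(X,* )$ whose left translations $L_x$ ($y\mapsto x*y$) are bijections and which satisfies $x*(y*z)=(x*y)*(x*z)$. $\mathrm{LMlt}(X,* )=\langle L_x:x\in X\rangle\le S_X$, where $S_X$ is the symmetric group on $X$. A subgroup $G\le S_X$ is rack admissible if there is a rack $(X,* )$ with $\mathrm{LMlt}(X,* )=G$. *)

From mathcomp Require Import all_boot fingroup perm.
Set Implicit Arguments. Unset Strict Implicit. Unset Printing Implicit Defensive.

Definition is_rack (X : finType) (op : X -> X -> X) : Prop :=
  (forall x, bijective (op x)) /\
  (forall x y z, op x (op y z) = op (op x y) (op x z)).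

Definition Lset (X : finType) (op : X -> X -> X) : {set {perm X}} :=
  [set s : {perm X} | [exists x, [forall y, s y == op x y]]].

Definition LMlt (X : finType) (op : X -> X -> X) : {set {perm X}} :=
  generated (Lset op).

(* Every left translation L_x is an automorphism of the rack, so LMlt consists
   of automorphisms.  If LMlt is all of S_X, then every permutation fixing x
   commutes with L_x; for |X| >= 4 the centraliser of a point stabiliser in S_X
   is trivial, so every L_x is the identity and LMlt is trivial, which S_X is
   not.  (For |X| = 3 the stabiliser is abelian and the dihedral quandle of
   order 3 does have LMlt = S_3.) *)

From mathcomp Require Import all_boot fingroup perm action.
From mathcomp Require Import zify.
Set Implicit Arguments. Unset Strict Implicit. Unset Printing Implicit Defensive.
Import GroupScope.

Section RackAutomorphisms.
Variables (X : finType) (op : X -> X -> X).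

Definition rack_aut : {set {perm X}} :=
  [set g : {perm X} | [forall y, forall z, g (op y z) == op (g y) (g z)]].

Lemma rack_autP (g : {perm X}) :
  reflect (forall y z, g (op y z) = op (g y) (g z)) (g \in rack_aut).
Proof.
rewrite inE; apply: (iffP forallP) => [gA y z | gA y].
  by apply/eqP; move/forallP: (gA y).
by apply/forallP => z; rewrite gA.
Qed.

Lemma rack_aut_group_set : group_set rack_aut.
Proof.
apply/group_setP; split; first by apply/rack_autP => y z; rewrite !perm1.
move=> g h /rack_autP gA /rack_autP hA; apply/rack_autP => y z.
by rewrite !permM gA hA.
Qed.

Canonical rack_aut_group := Group rack_aut_group_set.

Hypothesis op_sd : forall x y z, op x (op y z) = op (op x y) (op x z).

Lemma Lset_sub_rack_aut : Lset op \subset rack_aut.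
Proof.
apply/subsetP => s; rewrite inE => /existsP[x /forallP Ls].
by apply/rack_autP => y z; rewrite !(eqP (Ls _)) op_sd.
Qed.

Lemma LMlt_sub_rack_aut : LMlt op \subset rack_aut.
Proof. by rewrite gen_subG Lset_sub_rack_aut. Qed.

End RackAutomorphisms.

Lemma centraliser_perm_stabiliser_trivial (X : finType) (y : X) :
  4 <= #|X| -> 'C('C[y | 'P]) = 1.
Proof.
move=> hX; apply/trivgP/subsetP => c /centP cC; rewrite inE; apply/eqP/permP.
have avoid3 a b : exists w, w \notin [set y; a; b].
  have : 0 < #|~: [set y; a; b]|.
    move: hX; rewrite -(cardsC [set y; a; b]).
    have := (leq_card_setU [set y; a] [set b]).1; rewrite cards2 cards1.
    by case: (y != a) => /=; lia.
  by case/card_gt0P => w; rewrite inE; exists w.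
have fix_off_y z : z != y -> c z = z.
  move=> zy; case: (eqVneq (c z) z) => // czz.
  have [w] := avoid3 z (c z); rewrite !inE !negb_or => /andP[/andP[wy wz] wcz].
  have tzw_y : tperm z w \in 'C[y | 'P] by apply/astab1P; rewrite /= apermE tpermD.
  (* tperm z w fixes y and c z *)
  have : c w = c z.
    by rewrite -{1}(tpermL z w) -permM -(cC _ tzw_y) permM tpermD // eq_sym.
  by move/perm_inj/eqP; rewrite (negbTE wz).
move=> z; rewrite perm1; case: (eqVneq z y) => [-> | /fix_off_y //].
case: (eqVneq (c y) y) => // cyy.
by move: (fix_off_y _ cyy) => /perm_inj /eqP; rewrite (negbTE cyy).
Qed.

Theorem corollary3p8 (X : finType) (hX : 4 <= #|X|) :
  ~ exists op : X -> X -> X, is_rack op /\ LMlt op = [set: {perm X}].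
Proof.
case=> op [[_ op_sd] LMltT].
have all_rack_aut g : g \in rack_aut op.
  by apply: subsetP (LMlt_sub_rack_aut op_sd) _ _; rewrite LMltT inE.
have Lset1 : Lset op \subset [1 {perm X}].
  apply/subsetP => s; rewrite inE => /existsP[x /forallP Ls].
  rewrite -(centraliser_perm_stabiliser_trivial x hX).
  apply/centP => g /astab1P; rewrite /= apermE => gx; apply/permP => w.
  by rewrite !permM !(eqP (Ls _)) (rack_autP _ _ (all_rack_aut g)) gx.
have [a [b [_ _ ab]]] : exists a b, [/\ a \in X, b \in X & a != b].
  by apply/card_gt1P; apply: leq_trans hX.
have LMlt1 : LMlt op \subset [1 {perm X}] by rewrite gen_subG.
have : tperm a b \in [1 {perm X}] by apply: (subsetP LMlt1); rewrite LMltT inE.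
by rewrite inE => /eqP /permP /(_ a); rewrite tpermL perm1 => ba; rewrite ba eqxx in ab.
Qed.
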